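(* Let $A$ be a commutative Noetherian ring containing a commutative subring $\mathbb{K}$, and let $y_1,\ldots,y_n\in A$. Let $S=\mathbb{K}[x_1,\ldots,x_n]$, let $\varphi:S\to S$ be a flat $\mathbb{K}$-algebra endomorphism with $\varphi(x_i)=s_ix_i$ for nonzero $s_i\in S$, let $\psi:S\to A$ be the $\mathbb{K}$-algebra homomorphism with $\psi(x_i)=y_i$, and let $\Phi:A\to A$ be a $\mathbb{K}$-algebra homomorphism with $\Phi\circ\psi=\psi\circ\varphi$. Assume that $\Phi$ is flat and that $y_1,\ldots,y_n$ is an $A$-Koszul regular sequence. Then the $\varphi$-Koszul complex $\mathcal{FK}_\bullet(y_1,\ldots,y_n;A)$ is a finite free resolution of $A/I_n$ in the category of left $A[\Theta;\Phi]$-modules, where $I_n=\langle y_1,\ldots,y_n\rangle$.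
   Context: For a commutative ring $B$ and ring endomorphism $\phi$ of $B$, the left skew polynomial ring $B[\Theta;\phi]$ is the ring which is a free left $B$-module with basis $\{\Theta^i\}_{i\geq0}$ and multiplication determined by $\Theta b=\phi(b)\Theta$ for $b\in B$. A sequence $f_1,\dots,f_n$ in a commutative ring $R$ is a Koszul regular sequence if the Koszul complex $K_\bullet(f_1,\ldots,f_n;R)$ is a free resolution of $R/\langle f_1,\dots,f_n\rangle$ (i.e. has homology only in degree $0$). Write $t_i=\psi(s_i)$, so $\Phi(y_i)=t_iy_i$; for $J=\{j_1<\cdots<j_k\}\subseteq\{1,\dots,n\}$ put $t_J=t_{j_1}\cdots t_{j_k}$ ($t_\emptyset=1$) and $\mathbf{e}_J=\mathbf{e}_{j_1}\wedge\cdots\wedge\mathbf{e}_{j_k}$. The complex $\mathcal{FK}_\bullet(y_1,\ldots,y_n;A)$ ($=A\otimes_S\mathcal{FK}_\bullet(x_1,\dots,x_n)$) is: for $0\le l\le n+1$, $\mathcal{FK}_l$ is the free left $A[\Theta;\Phi]$-module with basis $\{\mathbf{e}_I:|I|=l\}\cup\{\mathbf{e}_J\wedge u:|J|=l-1\}$, and $\partial_l:\mathcal{FK}_l\to\mathcal{FK}_{l-1}$ is the left $A[\Theta;\Phi]$-linear map with $\partial_l(\mathbf{e}_I)=\sum_{r=1}^l(-1)^{r-1}y_{i_r}\mathbf{e}_{I\setminus\{i_r\}}$ for $I=\{i_1<\dots<i_l\}$ and $\partial_l(\mathbf{e}_J\wedge u)=(-1)^{l-1}(\Theta-t_J)\mathbf{e}_J+\sum_{r=1}^{l-1}(-1)^{r-1}\Phi(y_{j_r})\mathbf{e}_{J\setminus\{j_r\}}\wedge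 u$ for $J=\{j_1<\dots<j_{l-1}\}$. $A/I_n$ is a left $A[\Theta;\Phi]$-module with $\Theta$ acting by the map induced by $\Phi$ (well defined since $\Phi(I_n)\subseteq I_n$). *)

From HB Require Import structures.
From mathcomp Require Import all_boot all_order all_algebra.
Set Implicit Arguments. Unset Strict Implicit. Unset Printing Implicit Defensive.
Import Order.TTheory GRing.Theory Num.Theory.
Local Open Scope ring_scope.

Fixpoint mpoly (R : comNzRingType) (n : nat) : comNzRingType :=
  if n is m.+1 then ({poly mpoly R m} : comNzRingType) else R.

Fixpoint mconst (R : comNzRingType) (n : nat) : R -> mpoly R n :=
  match n return R -> mpoly R n with
  | 0 => fun r => r
  | m.+1 => fun r => (@mconst R m r)%:P
  end.

(* the variables x_i, i : 'I_n (x_{n} of R[x_1..x_{n}] is the outermost 'X) *)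
Fixpoint mvar (R : comNzRingType) (n : nat) : 'I_n -> mpoly R n :=
  match n return 'I_n -> mpoly R n with
  | 0 => fun _ => 0
  | m.+1 => fun i => match unlift ord_max i with
                     | Some j => (@mvar R m j)%:P
                     | None => 'X
                     end
  end.

(* ---------- Flatness of a ring homomorphism f : R -> T (T viewed as an R-module
   via f), stated through the equational criterion of flatness
   (Stacks Project, Tag 00HK). ---------- *)
Definition flat_hom (R T : comNzRingType) (f : R -> T) : Prop :=
  forall (m : nat) (r : 'I_m -> R) (t : 'I_m -> T),
    \sum_(i < m) f (r i) * t i = 0 ->
    exists (k : nat) (a : 'I_m -> 'I_k -> R) (u : 'I_k -> T),
      (forall i, t i = \sum_(j < k) f (a i j) * u j) /\
      (forall j, \sum_(i < m) r i * a i j = 0).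

Definition is_ideal (A : comNzRingType) (I : A -> Prop) : Prop :=
  I 0 /\ (forall x y, I x -> I y -> I (x + y)) /\ (forall a x, I x -> I (a * x)).

Definition noetherian (A : comNzRingType) : Prop :=
  forall I : A -> Prop, is_ideal I ->
    exists (m : nat) (g : 'I_m -> A),
      forall x, I x <-> exists c : 'I_m -> A, x = \sum_(i < m) c i * g i.

Definition in_ideal (A : comNzRingType) (n : nat) (y : 'I_n -> A) (a : A) : Prop :=
  exists c : 'I_n -> A, a = \sum_(i < n) c i * y i.

(* ---------- Koszul complex K(y_1..y_n; A) ----------
   A chain is a function on subsets I of {1..n} (coefficient of e_I). *)
(* sign (-1)^(r-1) where i is the r-th element of I *)
Definition ksign (A : comNzRingType) (n : nat) (i : 'I_n) (I : {set 'I_n}) : A :=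
  (-1) ^+ #|[set j in I | (nat_of_ord j < nat_of_ord i)%N]|.

(* d(e_I) = sum_r (-1)^(r-1) y_{i_r} e_{I \ i_r}, extended A-linearly *)
Definition koszul_d (A : comNzRingType) (n : nat) (y : 'I_n -> A)
  (c : {ffun {set 'I_n} -> A}) : {ffun {set 'I_n} -> A} :=
  [ffun K : {set 'I_n} => \sum_(i : 'I_n | i \notin K) ksign A i (i |: K) * y i * c (i |: K)].

Definition supported (T : zmodType) (n : nat) (l : nat) (c : {ffun {set 'I_n} -> T}) : Prop :=
  forall I : {set 'I_n}, #|I| != l -> c I = 0.

Definition koszul_regular (A : comNzRingType) (n : nat) (y : 'I_n -> A) : Prop :=
  forall l, (0 < l)%N -> forall c : {ffun {set 'I_n} -> A},
    supported l c -> koszul_d y c = 0 ->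
    exists b, supported l.+1 b /\ koszul_d y b = c.

(* ---------- Skew polynomial ring A[Theta; Phi] ----------
   Elements are represented by their coefficient polynomials sum_i a_i Theta^i
   (a_i on the left); the multiplication is the skew one:
   (a Theta^i)(b Theta^j) = a Phi^i(b) Theta^(i+j). *)
Definition skmul (A : comNzRingType) (Phi : A -> A) (p q : {poly A}) : {poly A} :=
  \sum_(i < size p) (p`_i *: ('X^i * map_poly (iter i Phi) q)).

Definition tprod (A : comNzRingType) (n : nat) (t : 'I_n -> A) (J : {set 'I_n}) : A :=
  \prod_(j in J) t j.

(* An element of the total module of FK: x.1 I = coefficient of e_I,
   x.2 J = coefficient of e_J /\ u. *)
Definition fkT (A : comNzRingType) (n : nat) : Type :=
  ({ffun {set 'I_n} -> {poly A}} * {ffun {set 'I_n} -> {poly A}})%type.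

(* degree-l part: e_I with |I| = l, e_J /\ u with |J| = l - 1 *)
Definition inFK (A : comNzRingType) (n : nat) (l : nat) (x : fkT A n) : Prop :=
  supported l x.1 /\ (forall J : {set 'I_n}, #|J|.+1 != l -> x.2 J = 0).

(* The differential of FK, the left A[Theta;Phi]-linear map with
   d(e_I)      = sum_r (-1)^(r-1) y_{i_r} e_{I\i_r}
   d(e_J /\ u) = (-1)^(|J|) (Theta - t_J) e_J + sum_r (-1)^(r-1) Phi(y_{j_r}) e_{J\j_r} /\ u,
   applied to x = sum_I x.1 I e_I + sum_J x.2 J e_J /\ u. *)
Definition fk_d (A : comNzRingType) (n : nat) (Phi : A -> A) (y t : 'I_n -> A)
  (x : fkT A n) : fkT A n :=
  ([ffun K : {set 'I_n} => \sum_(i : 'I_n | i \notin K)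
                 skmul Phi (x.1 (i |: K)) ((ksign A i (i |: K) * y i)%:P)
              + skmul Phi (x.2 K) ((-1) ^+ #|K| *: ('X - (tprod t K)%:P))],
   [ffun K : {set 'I_n} => \sum_(j : 'I_n | j \notin K)
                 skmul Phi (x.2 (j |: K)) ((ksign A j (j |: K) * Phi (y j))%:P)]).

Definition fk0 (A : comNzRingType) (n : nat) : fkT A n := (0, 0).

(* augmentation FK_0 = A[Theta;Phi] e_emptyset -> A/I_n, p e_0 |-> p . (1 mod I_n),
   where Theta acts on A/I_n through Phi; returns a representative in A. *)
Definition aug (A : comNzRingType) (Phi : A -> A) (p : {poly A}) : A :=
  \sum_(i < size p) p`_i * iter i Phi 1.

(* Write an element of FK as a pair x = (x1, x2) of Koszul chains with
   coefficients in A[Θ;Φ] (x1 on the e_I, x2 on the e_J ∧ u).  Since Θ a = Φ(a) Θ,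
   the Θ^k-coefficients of the differential are
     (d x)1_k = ∂[Φ^k y] x1_k + G_k x2,      (d x)2_k = ∂[Φ^(k+1) y] x2_k,
   with G_k(b)_J = (-1)^|J| (b_(k-1),J - Φ^k(t_J) b_k,J).  The relation
   Φ(y_i) = t_i y_i makes G anticommute with ∂, so FK is the mapping cone of G
   between Koszul complexes on the sequences Φ^k y.  Flatness of Φ transports
   Koszul regularity from y to every Φ^k y (equational criterion of flatness), so a
   cycle is lifted coefficientwise, first its x2 part and then x1 minus the G-image
   of that lift.  In the lowest degrees H_0 replaces acyclicity: the ideals (Φ^k y)
   decrease inside (y), the augmentation telescopes the G-terms away, and a kernel
   element of the augmentation is hit by the Θ-polynomial of its tail sums. *)

From HB Require Import structures.
From mathcomp Require Import all_boot all_order all_algebra zify ring.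
Set Implicit Arguments. Unset Strict Implicit. Unset Printing Implicit Defensive.
Import GRing.Theory.
Local Open Scope ring_scope.

Lemma bounded_choice (T : Type) (x0 : T) (P : nat -> T -> Prop) (N : nat) :
  (forall k, (k < N)%N -> exists x, P k x) ->
  exists f : nat -> T, forall k, (k < N)%N -> P k (f k).
Proof.
elim: N => [|N IH] hP; first by exists (fun=> x0).
have [f hf] := IH (fun k hk => hP k (ltnW hk)).
have [x hx] := hP N (ltnSn N).
exists (fun k => if k == N then x else f k) => k; rewrite ltnS leq_eqVlt.
by case: eqP => [-> | _ /hf].
Qed.

Lemma sumr_ord_shrink (V : nmodType) (G : nat -> V) (m N : nat) : (m <= N)%N ->
  (forall i, (m <= i < N)%N -> G i = 0) -> \sum_(i < N) G i = \sum_(i < m) G i.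
Proof.
move=> le_mN G0; rewrite -!(big_mkord xpredT) (big_cat_nat (leq0n m) le_mN) /=.
rewrite [X in _ + X]big_nat_cond [X in _ + X]big1 ?addr0 // => i.
by rewrite andbT => /G0.
Qed.

Section IterMorphism.
Variables (A : comNzRingType) (Phi : {rmorphism A -> A}) (k : nat).

Fact iter_is_zmod_morphism : zmod_morphism (iter k Phi).
Proof. by move=> a b; elim: k => //= j ->; rewrite rmorphB. Qed.

Fact iter_is_monoid_morphism : monoid_morphism (iter k Phi).
Proof.
split; first by elim: k => //= j ->; rewrite rmorph1.
by move=> a b; elim: k => //= j ->; rewrite rmorphM.
Qed.

HB.instance Definition _ :=
  GRing.isZmodMorphism.Build A A (iter k Phi) iter_is_zmod_morphism.
HB.instance Definition _ :=
  GRing.isMonoidMorphism.Build A A (iter k Phi) iter_is_monoid_morphism.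

End IterMorphism.

Section SkewPolynomial.
Variables (A : comNzRingType) (Phi : {rmorphism A -> A}).

Lemma coef_skmul (p q : {poly A}) k :
  (skmul Phi p q)`_k = \sum_(i < k.+1) p`_i * iter i Phi q`_(k - i).
Proof.
pose G i := if (k < i)%N then 0 else p`_i * iter i Phi q`_(k - i).
rewrite /skmul coef_sum (eq_bigr (fun i : 'I_(size p) => G i)) => [|i _]; last first.
  by rewrite coefZ coefXnM coef_map_id0 ?rmorph0 // /G; case: ifP; rewrite ?mulr0.
rewrite -(@sumr_ord_shrink _ G _ (size p + k.+1)) ?leq_addr //; last first.
  by move=> i /andP[/(nth_default 0) p0 _]; rewrite /G p0 mul0r if_same.
rewrite (@sumr_ord_shrink _ G k.+1) ?leq_addl // => [|i /andP[ltki _]]; last first.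
  by rewrite /G ltki.
by apply: eq_bigr => i _; rewrite /G /= ltnNge -ltnS ltn_ord.
Qed.

Lemma coef_skmulC (p : {poly A}) c k : (skmul Phi p c%:P)`_k = p`_k * iter k Phi c.
Proof.
rewrite coef_skmul big_ord_recr /= subnn coefC eqxx big1 ?add0r // => i _.
by rewrite coefC subn_eq0 leqNgt ltn_ord rmorph0 mulr0.
Qed.

Lemma coef_skmulZXsubC (p : {poly A}) a c k :
  (skmul Phi p (a *: ('X - c%:P)))`_k =
  (if k is k'.+1 then p`_k' * iter k' Phi a else 0) - p`_k * iter k Phi (a * c).
Proof.
have coefZXsubC j : (a *: ('X - c%:P))`_j =
    if j == 0%N then - (a * c) else if j == 1%N then a else 0.
  by rewrite coefZ coefB coefX coefC; case: j => [|[|j]] /=; rewrite ?subr0 ?sub0r;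
     rewrite ?mulr1 ?mulr0 ?mulrN.
rewrite coef_skmul big_ord_recr /= subnn coefZXsubC rmorphN mulrN.
case: k => [|k]; first by rewrite big_ord0 sub0r.
rewrite big_ord_recr /= subSnn coefZXsubC big1 ?add0r // => i _.
by rewrite coefZXsubC !ifN ?rmorph0 ?mulr0 //; have := ltn_ord i; lia.
Qed.

Lemma skmul0p (q : {poly A}) : skmul Phi 0 q = 0.
Proof. by rewrite /skmul size_poly0 big_ord0. Qed.

Lemma augE (p : {poly A}) N : (size p <= N)%N -> aug Phi p = \sum_(k < N) p`_k.
Proof.
move=> le_pN; rewrite /aug (@sumr_ord_shrink _ (fun k => p`_k) (size p)) //.
  by apply: eq_bigr => k _; rewrite rmorph1 mulr1.
by move=> k /andP[le_pk _]; rewrite nth_default.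
Qed.

End SkewPolynomial.

Section Chains.
Variables (A : comNzRingType) (n : nat).
Local Notation chain := {ffun {set 'I_n} -> A}.
Local Notation pchain := {ffun {set 'I_n} -> {poly A}}.

Definition chain_coef (x : pchain) (k : nat) : chain := [ffun I => (x I)`_k].

Definition chain_of_coefs (N : nat) (b : nat -> chain) : pchain :=
  [ffun I => \poly_(k < N) b k I].

Definition deg0_chain (a : A) : chain := [ffun K => if K == set0 then a else 0].

Definition deg1_chain (c : 'I_n -> A) : chain :=
  [ffun K => \sum_i (K == [set i])%:R * c i].

Lemma chain_coefE x k I : chain_coef x k I = (x I)`_k.
Proof. by rewrite ffunE. Qed.

Lemma chain_coef0 k : chain_coef 0 k = 0.
Proof. by apply/ffunP => I; rewrite !ffunE coef0. Qed.

Lemma chain_coef_inj (x x' : pchain) :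
  (forall k, chain_coef x k = chain_coef x' k) -> x = x'.
Proof.
move=> eq_x; apply/ffunP => I; apply/polyP => k.
by have /ffunP/(_ I) := eq_x k; rewrite !ffunE.
Qed.

Lemma supported_chain_coef l (x : pchain) k : supported l x -> supported l (chain_coef x k).
Proof. by move=> sx I hI; rewrite ffunE sx // coef0. Qed.

Lemma chain_coef_eventually0 (x : pchain) : exists N, forall k, (N <= k)%N -> chain_coef x k = 0.
Proof.
exists (\max_I size (x I)) => k le_Nk; apply/ffunP => I; rewrite !ffunE nth_default //.
exact: leq_trans (leq_bigmax I) le_Nk.
Qed.

Lemma chain_coef_of_coefs N b k :
  chain_coef (chain_of_coefs N b) k = if (k < N)%N then b k else 0.
Proof. by apply/ffunP => I; rewrite !ffunE coef_poly; case: ifP; rewrite ?ffunE. Qed.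

Lemma supported_chain_of_coefs l N b :
  (forall k, (k < N)%N -> supported l (b k)) -> supported l (chain_of_coefs N b).
Proof.
move=> sb I hI; rewrite ffunE; apply/polyP => k.
by rewrite coef_poly coef0; case: ifP => // /sb ->.
Qed.

Lemma deg0_chain_set0 a : deg0_chain a set0 = a.
Proof. by rewrite ffunE eqxx. Qed.

Lemma supported_deg0_chain a : supported 0 (deg0_chain a).
Proof. by move=> K; rewrite ffunE cards_eq0 => /negbTE ->. Qed.

Lemma supported_deg1_chain c : supported 1 (deg1_chain c).
Proof.
move=> K hK; rewrite ffunE big1 // => i _.
by case: (K =P [set i]) hK => [-> | _ _]; rewrite ?cards1 ?mul0r.
Qed.

Lemma deg1_chain1 c i : deg1_chain c [set i] = c i.
Proof.
rewrite ffunE (bigD1 i) //= eqxx mul1r big1 ?addr0 // => j ji.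
by rewrite (inj_eq set1_inj) eq_sym (negbTE ji) mul0r.
Qed.

End Chains.

Arguments deg0_chain {A n} a.

Lemma chain_coef_deg0_chain (A : comNzRingType) n (q : {poly A}) k :
  chain_coef (deg0_chain q : {ffun {set 'I_n} -> _}) k = deg0_chain q`_k.
Proof. by apply/ffunP => K; rewrite !ffunE; case: ifP; rewrite ?coef0. Qed.

Section Ideals.
Variables (A : comNzRingType) (n : nat) (w : 'I_n -> A).

Lemma in_ideal0 : in_ideal w 0.
Proof. by exists (fun=> 0); rewrite big1 // => i _; rewrite mul0r. Qed.

Lemma in_idealD u v : in_ideal w u -> in_ideal w v -> in_ideal w (u + v).
Proof.
move=> [c ->] [d ->]; exists (fun i => c i + d i).
by rewrite -big_split; apply: eq_bigr => i _; rewrite mulrDl.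
Qed.

Lemma in_idealMl a v : in_ideal w v -> in_ideal w (a * v).
Proof.
move=> [c ->]; exists (fun i => a * c i).
by rewrite mulr_sumr; apply: eq_bigr => i _; rewrite mulrA.
Qed.

Lemma in_idealN v : in_ideal w v -> in_ideal w (- v).
Proof. by rewrite -mulN1r; apply: in_idealMl. Qed.

Lemma in_ideal_gen i : in_ideal w (w i).
Proof.
exists (fun j => (j == i)%:R); rewrite (bigD1 i) //= eqxx mul1r big1 ?addr0 //.
by move=> j /negbTE ->; rewrite mul0r.
Qed.

Lemma in_ideal_sum (I : finType) (P : pred I) (F : I -> A) :
  (forall i, P i -> in_ideal w (F i)) -> in_ideal w (\sum_(i | P i) F i).
Proof. by move=> wF; apply: big_ind => //; [apply: in_ideal0 | apply: in_idealD]. Qed.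

Lemma in_ideal_sub n' (w' : 'I_n' -> A) v :
  (forall i, in_ideal w (w' i)) -> in_ideal w' v -> in_ideal w v.
Proof.
by move=> ww' [c ->]; apply: in_ideal_sum => i _; apply/in_idealMl/ww'.
Qed.

End Ideals.

Lemma sumr_antisym (V : zmodType) n (F : 'I_n -> 'I_n -> V) :
  (forall i j, F i j = - F j i) -> (forall i, F i i = 0) -> \sum_i \sum_j F i j = 0.
Proof.
move=> Fanti F0.
have splitF i j : F i j = (if (i < j)%N then F i j else 0) + (if (j < i)%N then F i j else 0).
  by case: (ltngtP i j) => [||/val_inj ->]; rewrite ?F0 ?addr0 ?add0r.
under eq_bigr => i _ do under eq_bigr => j _ do rewrite splitF.
under eq_bigr => i _ do rewrite big_split /=.
rewrite big_split /= [X in _ + X]exchange_big -big_split big1 // => i _.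
rewrite -big_split big1 // => j _ /=.
by case: ifP => _; rewrite ?addr0 // [F i j]Fanti addNr.
Qed.

Section KoszulComplex.
Variables (A : comNzRingType) (n : nat) (w : 'I_n -> A).
Local Notation chain := {ffun {set 'I_n} -> A}.

Fact koszul_d_is_zmod_morphism : zmod_morphism (koszul_d w).
Proof.
move=> c c'; apply/ffunP => K; rewrite !ffunE -sumrB.
by apply: eq_bigr => i _; rewrite !ffunE mulrBr.
Qed.

HB.instance Definition _ :=
  GRing.isZmodMorphism.Build chain chain (koszul_d w) koszul_d_is_zmod_morphism.

Lemma ksign_setU1 i (K : {set 'I_n}) : i \notin K ->
  ksign A i (i |: K) = (-1) ^+ #|[set j in K | (j < i)%N]|.
Proof.
move=> iK; rewrite /ksign; congr (_ ^+ _); apply: eq_card => j; rewrite !inE.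
by case: eqP => [-> | _] //=; rewrite ltnn andbF.
Qed.

Lemma ksign_setU1C i j (K : {set 'I_n}) : i \notin K -> j \notin K -> i != j ->
  ksign A j (j |: (i |: K)) = (-1) ^+ (i < j)%N * (-1) ^+ #|[set m in K | (m < j)%N]|.
Proof.
move=> iK jK ij; rewrite ksign_setU1; last by rewrite in_setU1 negb_or eq_sym ij.
rewrite -exprD; congr (_ ^+ _).
have -> : [set m in i |: K | (m < j)%N] =
    if (i < j)%N then i |: [set m in K | (m < j)%N] else [set m in K | (m < j)%N].
  apply/setP => m; case: ifP => lt_ij; rewrite !inE;
    case: (eqVneq m i) => [->|] //=; rewrite ?lt_ij ?(negbTE iK) // andbF.
by case: ifP => //= _; rewrite cardsU1 inE (negbTE iK).
Qed.

Lemma koszul_dd c : koszul_d w (koszul_d w c) = 0.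
Proof.
apply/ffunP => K; rewrite !ffunE.
pose G i j := if [&& i \notin K, j \notin K & i != j] then
  ksign A i (i |: K) * w i * (ksign A j (j |: (i |: K)) * w j * c (j |: (i |: K)))
  else 0.
transitivity (\sum_i \sum_j G i j).
  rewrite big_mkcond; apply: eq_bigr => i _; rewrite /G.
  case: (boolP (i \notin K)) => iK /=; last by rewrite big1.
  rewrite ffunE big_distrr big_mkcond; apply: eq_bigr => j _ /=.
  by rewrite in_setU1 negb_or eq_sym; case: (j \in K); case: (i != j).
(* Removing i then j and removing j then i differ by exactly one sign flip. *)
apply: sumr_antisym => [i j|i]; last by rewrite /G eqxx !andbF.
rewrite /G; case: (boolP (i \notin K)) => iK; case: (boolP (j \notin K)) => jK;
  case: (eqVneq i j) => [->|ij] /=; rewrite ?oppr0 //.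
rewrite (ksign_setU1C iK jK ij) (ksign_setU1C jK iK) 1?eq_sym // !ksign_setU1 // setUCA.
case: (ltngtP i j) => [_|_|/val_inj eq_ij]; last by rewrite eq_ij eqxx in ij.
all: by rewrite /= expr1 expr0; ring.
Qed.

Lemma koszul_d_deg0_chain a : koszul_d w (deg0_chain a) = 0.
Proof.
apply/ffunP => K; rewrite !ffunE big1 // => i _.
by rewrite ffunE ifN ?mulr0 //; apply/set0Pn; exists i; rewrite setU11.
Qed.

Lemma koszul_d_deg1 c : koszul_d w (deg1_chain c) = deg0_chain (\sum_i w i * c i).
Proof.
apply/ffunP => K; rewrite !ffunE; case: eqP => [-> | /eqP K0].
  apply: eq_big => [i | i _]; first by rewrite inE.
  rewrite ksign_setU1 ?inE // setU0 deg1_chain1.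
  rewrite (_ : [set _ in set0 | _] = set0) ?cards0 ?mul1r //.
  by apply/setP => j; rewrite !inE.
rewrite big1 // => i iK; rewrite supported_deg1_chain ?mulr0 //.
by rewrite cardsU1 iK add1n eqSS cards_eq0.
Qed.

Lemma in_ideal_koszul_d_set0 c : in_ideal w (koszul_d w c set0).
Proof.
rewrite ffunE; apply: in_ideal_sum => i _.
by rewrite mulrC mulrA; apply/in_idealMl/in_ideal_gen.
Qed.

End KoszulComplex.

Section FlatBaseChange.
Variables (R T : comNzRingType) (f : {rmorphism R -> T}).

Lemma sum_rmorph_comb (I J : finType) (x : I -> R) (a : I -> J -> R) (u : J -> T) :
  \sum_i f (x i) * (\sum_j f (a i j) * u j) = \sum_j f (\sum_i x i * a i j) * u j.
Proof.
under eq_bigr => i _ do rewrite big_distrr.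
rewrite exchange_big; apply: eq_bigr => j _ /=.
rewrite rmorph_sum big_distrl; apply: eq_bigr => i _.
by rewrite rmorphM mulrA.
Qed.

Lemma flat_hom_solutions (I E : finType) (M : E -> I -> R) (t : I -> T) :
  flat_hom f -> (forall e, \sum_i f (M e i) * t i = 0) ->
  exists k (a : I -> 'I_k -> R) (u : 'I_k -> T),
    (forall i, t i = \sum_j f (a i j) * u j) /\
    (forall e j, \sum_i M e i * a i j = 0).
Proof.
move=> flat_f Mt0.
have sum_assoc (e : E) k k' (a : I -> 'I_k -> R) (a' : 'I_k -> 'I_k' -> R) l :
    \sum_i M e i * (\sum_j a i j * a' j l) = \sum_j (\sum_i M e i * a i j) * a' j l.
  under eq_bigr => i _ do rewrite big_distrr.
  rewrite exchange_big; apply: eq_bigr => j _ /=.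
  by rewrite big_distrl; apply: eq_bigr => i _; rewrite mulrA.
suff /(_ (enum E)) [k [a [u [ta Ma0]]]] : forall s : seq E,
    exists k (a : I -> 'I_k -> R) (u : 'I_k -> T),
    (forall i, t i = \sum_j f (a i j) * u j) /\
    (forall e, e \in s -> forall j, \sum_i M e i * a i j = 0).
  by exists k, a, u; split=> // e; apply: Ma0; rewrite mem_enum.
elim=> [|e s [k [a [u [ta Ma0]]]]].
  exists #|I|, (fun i j => (enum_rank i == j)%:R), (fun j => t (enum_val j)).
  split=> // i; rewrite (bigD1 (enum_rank i)) //= eqxx rmorph1 mul1r enum_rankK.
  by rewrite big1 ?addr0 // => j /negbTE; rewrite eq_sym => ->; rewrite rmorph0 mul0r.
have Mau0 : \sum_j f (\sum_i M e i * a i j) * u j = 0.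
  by rewrite -sum_rmorph_comb -[RHS](Mt0 e); apply: eq_bigr => i _; rewrite ta.
have [k' [a' [u' [ua' Ma'0]]]] := flat_f k _ u Mau0.
exists k', (fun i l => \sum_j a i j * a' j l), u'; split.
  by move=> i; rewrite ta -sum_rmorph_comb; apply: eq_bigr => j _; rewrite ua'.
move=> e'; rewrite inE => /orP[/eqP -> | e's] l; rewrite sum_assoc //.
by rewrite big1 // => j _; rewrite Ma0 ?mul0r.
Qed.

End FlatBaseChange.

Section KoszulCycleEquations.
Variables (A : comNzRingType) (n : nat).
Local Notation chain := {ffun {set 'I_n} -> A}.

(* The degree-l Koszul cycles as the solutions of a finite linear system: one
   equation per coefficient of the boundary, one per coefficient off degree l. *)
Definition koszul_cycle_eqn (w : 'I_n -> A) (l : nat)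
    (e : {set 'I_n} + {set 'I_n}) (I : {set 'I_n}) : A :=
  match e with
  | inl K => \sum_(i | i \notin K) (I == i |: K)%:R * (ksign A i I * w i)
  | inr J => ((#|J| != l) && (I == J))%:R
  end.

Lemma koszul_cycle_eqnP w l (c : chain) :
  supported l c /\ koszul_d w c = 0 <->
  forall e, \sum_I koszul_cycle_eqn w l e I * c I = 0.
Proof.
have eqn_inl K : \sum_I koszul_cycle_eqn w l (inl K) I * c I = koszul_d w c K.
  rewrite ffunE; under eq_bigr => I _ do rewrite big_distrl.
  rewrite exchange_big; apply: eq_bigr => i _ /=.
  rewrite (bigD1 (i |: K)) //= eqxx mul1r big1 ?addr0 => [|J /negbTE ->].
    by rewrite mulrC mulrA.
  by rewrite !mul0r.
have eqn_inr J : \sum_I koszul_cycle_eqn w l (inr J) I * c I = if #|J| != l then c J else 0.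
  rewrite (bigD1 J) //= eqxx andbT big1 ?addr0 => [|I /negbTE ->]; last first.
    by rewrite andbF mul0r.
  by case: ifP; rewrite ?mul1r ?mul0r.
split=> [[sc dc] [K | J] | eqns]; first by rewrite eqn_inl dc ffunE.
  by rewrite eqn_inr; case: ifP => // /sc.
split=> [J hJ | ]; first by have := eqns (inr J); rewrite eqn_inr hJ.
by apply/ffunP => K; rewrite -eqn_inl eqns ffunE.
Qed.

End KoszulCycleEquations.

Lemma rmorph_koszul_cycle_eqn (A B : comNzRingType) n (f : {rmorphism A -> B})
  (w : 'I_n -> A) l e I :
  f (koszul_cycle_eqn w l e I) = koszul_cycle_eqn (f \o w) l e I.
Proof.
case: e => [K | J] /=; last by rewrite rmorph_nat.
rewrite rmorph_sum; apply: eq_bigr => i _.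
by rewrite rmorphM rmorph_nat rmorphM rmorph_sign.
Qed.

Lemma koszul_regular_flat (A B : comNzRingType) (f : {rmorphism A -> B}) n
    (y : 'I_n -> A) :
  flat_hom f -> koszul_regular y -> koszul_regular (f \o y).
Proof.
move=> flat_f kr l l_gt0 c sc dc.
have eqns_c e : \sum_I f (koszul_cycle_eqn y l e I) * c I = 0.
  under eq_bigr do rewrite rmorph_koszul_cycle_eqn.
  by have /koszul_cycle_eqnP := conj sc dc.
have [k [a [u [ca eqns_a]]]] := flat_hom_solutions flat_f eqns_c.
have /fin_all_exists [b bP] (j : 'I_k) : exists bj : {ffun {set 'I_n} -> A},
    supported l.+1 bj /\ koszul_d y bj = [ffun I => a I j].
  suff /koszul_cycle_eqnP[] : forall e,
      \sum_I koszul_cycle_eqn y l e I * [ffun I => a I j] I = 0 by exact: kr.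
  by move=> e; under eq_bigr do rewrite ffunE; apply: eqns_a.
exists [ffun I => \sum_j f (b j I) * u j]; split.
  move=> I hI; rewrite ffunE big1 // => j _.
  by rewrite (proj1 (bP j)) // rmorph0 mul0r.
apply/ffunP => K; rewrite ffunE ca.
under eq_bigr => i _ do rewrite ffunE /= big_distrr.
rewrite exchange_big; apply: eq_bigr => j _ /=.
rewrite -[a K j](ffunE (fun I => a I j)) -(proj2 (bP j)) ffunE rmorph_sum big_distrl.
by apply: eq_bigr => i _; rewrite !rmorphM /ksign rmorph_sign mulrA.
Qed.

Lemma lift_koszul_cycles (A : comNzRingType) n (w : nat -> 'I_n -> A) l
    (a : {ffun {set 'I_n} -> {poly A}}) :
  (forall k, koszul_regular (w k)) -> (0 < l)%N -> supported l a ->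
  (forall k, koszul_d (w k) (chain_coef a k) = 0) ->
  exists b, supported l.+1 b /\ forall k, koszul_d (w k) (chain_coef b k) = chain_coef a k.
Proof.
move=> kr l_gt0 sa da; have [N aN0] := chain_coef_eventually0 a.
have [b bP] := @bounded_choice _ 0
  (fun k bk => supported l.+1 bk /\ koszul_d (w k) bk = chain_coef a k) N
  (fun k _ => kr k l l_gt0 _ (supported_chain_coef k sa) (da k)).
exists (chain_of_coefs N b); split.
  by apply: supported_chain_of_coefs => k /bP[].
move=> k; rewrite chain_coef_of_coefs; case: ltnP => [/bP[] // | /aN0 ->].
exact: raddf0.
Qed.

Lemma in_ideal_of_differences (A : comNzRingType) n (w : nat -> 'I_n -> A)
    (beta : nat -> A) (N : nat) :
  (forall k i, in_ideal (w k) (w k.+1 i)) -> (forall k, (N <= k)%N -> beta k = 0) ->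
  (forall k, in_ideal (w k) (beta k - beta k.+1)) -> forall k, in_ideal (w k) (beta k).
Proof.
move=> w_decr beta0 dbeta k.
suff /(_ N k) : forall m k, (N <= k + m)%N -> in_ideal (w k) (beta k).
  by apply; rewrite leq_addl.
elim=> [|m IH] {}k le_N; first by rewrite addn0 in le_N; rewrite beta0 //; apply: in_ideal0.
rewrite -(subrK (beta k.+1) (beta k)); apply: in_idealD => //.
by apply: (in_ideal_sub (w_decr k)); apply: IH; rewrite addSnnS.
Qed.

Section FKComplex.
Variables (A : comNzRingType) (Phi : {rmorphism A -> A}) (n : nat) (y t : 'I_n -> A).
Hypothesis Phi_y : forall i, Phi (y i) = t i * y i.
Local Notation chain := {ffun {set 'I_n} -> A}.
Local Notation pchain := {ffun {set 'I_n} -> {poly A}}.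
Local Notation d := (fk_d Phi y t).

Definition iter_y (k : nat) : 'I_n -> A := fun i => iter k Phi (y i).

Definition fk_twist (b : pchain) : pchain :=
  [ffun K : {set 'I_n} => skmul Phi (b K) ((-1) ^+ #|K| *: ('X - (tprod t K)%:P))].

Definition cone_map (b : pchain) (k : nat) : chain :=
  [ffun K : {set 'I_n} => (-1) ^+ #|K| *
     ((if k is k'.+1 then (b K)`_k' else 0) - (b K)`_k * iter k Phi (tprod t K))].

Lemma chain_coef_fk_twist b k : chain_coef (fk_twist b) k = cone_map b k.
Proof.
apply/ffunP => K; rewrite !ffunE coef_skmulZXsubC.
by case: k => [|k]; rewrite ?rmorphM ?rmorph_sign /=; ring.
Qed.

Lemma cone_map_set0 b k :
  cone_map b k set0 = (if k is k'.+1 then (b set0)`_k' else 0) - (b set0)`_k.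
Proof. by rewrite ffunE cards0 expr0 mul1r /tprod big_set0 rmorph1 mulr1. Qed.

Lemma chain_coef_fk_d1 x k :
  chain_coef (d x).1 k = koszul_d (iter_y k) (chain_coef x.1 k) + cone_map x.2 k.
Proof.
rewrite -chain_coef_fk_twist; apply/ffunP => K; rewrite !ffunE coefD coef_sum.
congr (_ + _); apply: eq_bigr => i _.
by rewrite coef_skmulC !ffunE rmorphM rmorph_sign mulrC.
Qed.

Lemma chain_coef_fk_d2 x k :
  chain_coef (d x).2 k = koszul_d (iter_y k.+1) (chain_coef x.2 k).
Proof.
apply/ffunP => K; rewrite !ffunE coef_sum; apply: eq_bigr => i _.
by rewrite coef_skmulC ffunE rmorphM rmorph_sign mulrC /iter_y iterSr.
Qed.

Lemma iter_yS k i : iter_y k.+1 i = iter k Phi (t i) * iter_y k i.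
Proof. by rewrite /iter_y iterSr Phi_y rmorphM. Qed.

Lemma koszul_d_cone_map (b db : pchain) :
  (forall k, chain_coef db k = koszul_d (iter_y k.+1) (chain_coef b k)) ->
  forall k, koszul_d (iter_y k) (cone_map b k) = - cone_map db k.
Proof.
move=> db_eq k; apply/ffunP => K; rewrite !ffunE.
have sign_setU1 i : i \notin K -> (-1) ^+ #|i |: K| = - (-1) ^+ #|K| :> A.
  by move=> iK; rewrite cardsU1 iK exprS mulN1r.
have tprod_setU1 i : i \notin K -> tprod t (i |: K) = t i * tprod t K.
  by move=> iK; rewrite /tprod big_setU1.
have /ffunP/(_ K) := db_eq k; rewrite !ffunE => ->.
case: k => [|k] in db_eq *.
  rewrite sub0r mulrN opprK big_distrl big_distrr; apply: eq_bigr => i iK /=.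
  by rewrite !ffunE sign_setU1 // tprod_setU1 // Phi_y /=; ring.
have /ffunP/(_ K) := db_eq k; rewrite !ffunE => ->.
rewrite mulr_suml -sumrB mulr_sumr -sumrN; apply: eq_bigr => i iK.
by rewrite !ffunE sign_setU1 // tprod_setU1 // (iter_yS k.+1) rmorphM; ring.
Qed.

Lemma fk_dd x : d (d x) = fk0 A n.
Proof.
rewrite /fk0 [LHS]surjective_pairing; congr (_, _); apply: chain_coef_inj => k.
  rewrite chain_coef0 chain_coef_fk_d1 chain_coef_fk_d1 raddfD /= koszul_dd add0r.
  by rewrite (koszul_d_cone_map (chain_coef_fk_d2 x)) addNr.
by rewrite chain_coef0 !chain_coef_fk_d2 koszul_dd.
Qed.

Lemma in_ideal_iter_y k i : in_ideal y (iter_y k i).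
Proof.
elim: k => [|k IH]; first exact: in_ideal_gen.
by rewrite iter_yS; apply: in_idealMl.
Qed.

Lemma in_ideal_iter_yS k i : in_ideal (iter_y k) (iter_y k.+1 i).
Proof. by rewrite iter_yS; apply/in_idealMl/in_ideal_gen. Qed.

Lemma koszul_regular_iter_y :
  flat_hom Phi -> koszul_regular y -> forall k, koszul_regular (iter_y k).
Proof. by move=> flat_Phi kr; elim=> // k; apply: koszul_regular_flat. Qed.

Lemma lift_deg0_cycles (b : pchain) : supported 0 b ->
  (forall k, in_ideal (iter_y k.+1) ((b set0)`_k - (b set0)`_k.+1)) ->
  exists b', supported 1 b' /\
    forall k, koszul_d (iter_y k.+1) (chain_coef b' k) = chain_coef b k.
Proof.
move=> sb dbeta; set N := size (b set0).
have beta_in k : in_ideal (iter_y k.+1) (b set0)`_k.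
  apply: (@in_ideal_of_differences _ _ (fun k => iter_y k.+1) _ N) => // j.
    exact: in_ideal_iter_yS.
  by move=> le_Nj; rewrite nth_default.
have [c cP] : exists c : nat -> 'I_n -> A,
    forall k, (k < N)%N -> (b set0)`_k = \sum_i iter_y k.+1 i * c k i.
  apply: (@bounded_choice _ (fun=> 0)
    (fun k ck => (b set0)`_k = \sum_i iter_y k.+1 i * ck i)) => k _.
  have [c ->] := beta_in k.
  by exists c; apply: eq_bigr => i _; rewrite mulrC.
exists (chain_of_coefs N (fun k => deg1_chain (c k))); split.
  by apply: supported_chain_of_coefs => k _; apply: supported_deg1_chain.
move=> k; rewrite chain_coef_of_coefs; apply/ffunP => K; rewrite [RHS]ffunE.
have [-> | K0] := eqVneq K set0.
  case: ltnP => [/cP -> | le_Nk]; first by rewrite koszul_d_deg1 ffunE eqxx.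
  by rewrite raddf0 ffunE nth_default.
rewrite sb ?cards_eq0 // coef0.
by case: ifP; rewrite ?koszul_d_deg1 ?raddf0 !ffunE ?(negbTE K0).
Qed.

Lemma fk_cycle_is_boundary l x :
  flat_hom Phi -> koszul_regular y -> (0 < l)%N -> inFK l x -> d x = fk0 A n ->
  exists z, inFK l.+1 z /\ d z = x.
Proof.
move=> flat_Phi kr l_gt0 [s1 s2] dx0.
have kr_iter := koszul_regular_iter_y flat_Phi kr.
have cyc1 k : koszul_d (iter_y k) (chain_coef x.1 k) + cone_map x.2 k = 0.
  by rewrite -chain_coef_fk_d1 dx0 chain_coef0.
have cyc2 k : koszul_d (iter_y k.+1) (chain_coef x.2 k) = 0.
  by rewrite -chain_coef_fk_d2 dx0 chain_coef0.
have [b [sb db]] : exists b, supported l b /\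
    forall k, koszul_d (iter_y k.+1) (chain_coef b k) = chain_coef x.2 k.
  case: l => [|[|l]] // in l_gt0 s1 s2 *.
    apply: lift_deg0_cycles => [J hJ | k]; first exact: s2.
    move/eqP: (cyc1 k.+1); rewrite addrC addr_eq0 => /eqP/ffunP/(_ set0).
    rewrite cone_map_set0 ffunE => ->.
    exact/in_idealN/in_ideal_koszul_d_set0.
  by apply: lift_koszul_cycles => // J; rewrite -eqSS => /s2.
set a := x.1 - fk_twist b.
have ca k : chain_coef a k = chain_coef x.1 k - cone_map b k.
  by rewrite -chain_coef_fk_twist; apply/ffunP => K; rewrite !ffunE coefB.
have [a' [sa' da']] : exists a', supported l.+1 a' /\
    forall k, koszul_d (iter_y k) (chain_coef a' k) = chain_coef a k.
  apply: lift_koszul_cycles => // [I hI | k].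
    by rewrite !ffunE s1 // sb // skmul0p subrr.
  by rewrite ca raddfB /= (koszul_d_cone_map (fun k => esym (db k))) opprK cyc1.
exists (a', b); split; first by split => // J hJ; apply: sb; rewrite -eqSS.
apply: injective_projections; apply: chain_coef_inj => k.
  by rewrite chain_coef_fk_d1 da' ca subrK.
by rewrite chain_coef_fk_d2 db.
Qed.

Lemma in_ideal_aug_fk_d z : in_ideal y (aug Phi ((d z).1 set0)).
Proof.
set p := (d z).1 set0; set m := (size p + size (z.2 set0))%N.
have pE k : p`_k = koszul_d (iter_y k) (chain_coef z.1 k) set0 + cone_map z.2 k set0.
  by rewrite -chain_coefE chain_coef_fk_d1 ffunE.
have telescope (g : nat -> A) j :
    \sum_(k < j.+1) ((if nat_of_ord k is k'.+1 then g k' else 0) - g k) = - g j.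
  elim: j => [|j IH]; first by rewrite big_ord1 sub0r.
  by rewrite big_ord_recr /= IH addKr.
rewrite (augE _ (leqW (leq_addr _ _) : size p <= m.+1)%N).
under eq_bigr do rewrite pE cone_map_set0.
rewrite big_split /= telescope nth_default ?leq_addl // oppr0 addr0.
apply: in_ideal_sum => k _; apply: (in_ideal_sub (in_ideal_iter_y k)).
exact: in_ideal_koszul_d_set0.
Qed.

Lemma aug_kernel_is_boundary x :
  inFK 0 x -> in_ideal y (aug Phi (x.1 set0)) -> exists z, inFK 1 z /\ d z = x.
Proof.
move=> [s1 s2] [c aug_c]; set p := x.1 set0 in aug_c *; set N := size p.
pose Q k := \sum_(k.+1 <= j < N) p`_j.
have Q_rec k : \sum_(k <= j < N) p`_j = p`_k + Q k.
  have [lt_kN | le_Nk] := ltnP k N; first by rewrite big_ltn.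
  by rewrite /Q !big_geq ?nth_default ?add0r // leqW.
pose q := \poly_(k < N) Q k.
have qE k : q`_k = Q k.
  by rewrite coef_poly; case: ltnP => // le_Nk; rewrite /Q big_geq // leqW.
exists (chain_of_coefs 1 (fun=> deg1_chain c), deg0_chain q); split.
  split=> [|J]; last exact: supported_deg0_chain.
  by apply: supported_chain_of_coefs => k _; apply: supported_deg1_chain.
apply: injective_projections; apply: chain_coef_inj => k; last first.
  rewrite chain_coef_fk_d2 chain_coef_deg0_chain koszul_d_deg0_chain.
  by apply/ffunP => K; rewrite !ffunE s2 ?coef0.
rewrite chain_coef_fk_d1 chain_coef_of_coefs; apply/ffunP => K; rewrite ffunE [RHS]ffunE.
have [-> | K0] := eqVneq K set0; last first.
  rewrite s1 ?cards_eq0 // coef0 /=.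
  have -> : cone_map (deg0_chain q) k K = 0.
    by rewrite !ffunE (negbTE K0) coef0 mul0r; case: k => [|k]; rewrite ?coef0 subrr mulr0.
  by case: ifP; rewrite ?koszul_d_deg1 ?raddf0 ffunE ?(negbTE K0) addr0.
rewrite cone_map_set0 /= deg0_chain_set0; case: k => [|k] /=; rewrite !qE.
  rewrite koszul_d_deg1 ffunE eqxx sub0r.
  have -> : \sum_i iter_y 0 i * c i = p`_0 + Q 0%N.
    rewrite -Q_rec big_mkord -(augE Phi) // aug_c.
    by apply: eq_bigr => i _; rewrite mulrC.
  by rewrite addrK.
by rewrite raddf0 ffunE add0r {1}/Q Q_rec addrK.
Qed.

End FKComplex.

Unset Implicit Arguments.
Theorem theorem3
  (A K : comNzRingType) (iota : {rmorphism K -> A}) (n : nat) (y : 'I_n -> A)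
  (s : 'I_n -> mpoly K n)
  (phi : {rmorphism mpoly K n -> mpoly K n})
  (psi : {rmorphism mpoly K n -> A})
  (Phi : {rmorphism A -> A}) :
  noetherian A ->
  injective iota ->
  (forall i, s i != 0) ->
  (forall k : K, phi (@mconst K n k) = @mconst K n k) ->
  (forall i, phi (@mvar K n i) = s i * @mvar K n i) ->
  flat_hom phi ->
  (forall k : K, psi (@mconst K n k) = iota k) ->
  (forall i, psi (@mvar K n i) = y i) ->
  (forall k : K, Phi (iota k) = iota k) ->
  (forall p, Phi (psi p) = psi (phi p)) ->
  flat_hom Phi ->
  koszul_regular y ->
  let t := fun i => psi (s i) in
  (* exactness at FK_l for l >= 1 (FK_{n+2} = 0) *)
  (forall l, (0 < l)%N -> forall x : fkT A n, inFK l x ->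
     (fk_d Phi y t x = fk0 A n <->
      exists z, inFK l.+1 z /\ fk_d Phi y t z = x)) /\
  (* exactness at FK_0: kernel of the augmentation = image of d_1 *)
  (forall x : fkT A n, inFK 0 x ->
     (in_ideal y (aug Phi (x.1 set0)) <->
      exists z, inFK 1 z /\ fk_d Phi y t z = x)) /\
  (* the augmentation FK_0 -> A/I_n is surjective *)
  (forall a : A, exists x : fkT A n, inFK 0 x /\ in_ideal y (aug Phi (x.1 set0) - a)).
Proof.
move=> _ _ _ _ phi_x _ _ psi_x _ Phi_psi flat_Phi kr t.
have Phi_y i : Phi (y i) = t i * y i by rewrite -psi_x Phi_psi phi_x rmorphM psi_x.
split; [|split].
- move=> l l_gt0 x xl; split; first exact: fk_cycle_is_boundary.
  by case=> z [_ <-]; apply: fk_dd.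
- move=> x x0; split; first exact: aug_kernel_is_boundary.
  by case=> z [_ <-]; apply: in_ideal_aug_fk_d.
- move=> a; exists (deg0_chain a%:P, 0); split.
    by split=> [|J _]; [apply: supported_deg0_chain | rewrite ffunE].
  rewrite deg0_chain_set0 (augE _ (size_polyC_leq1 a)) big_ord1 coefC subrr.
  exact: in_ideal0.
Qed.
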